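(* Let $0<\delta<\frac34$ and suppose there is a constant $C_0>0$ such that for every finite field $F_q$ of odd characteristic and all $f_1,f_2:F_q\to\mathbb{C}$, $$\big\|\mathcal{A}(f_1,f_2)-\mathbb{E}[f_1]\mathbb{E}[f_2]\big\|_2\leq C_0\,q^{-\delta}\|f_1\|_2\|f_2\|_2 .$$ Then there is a constant $C>0$ such that for every finite field $F_q$ of odd characteristic and every $A\subset F_q$ with $|A|\geq C q^{1-\frac23\delta}$, there exist $x,y\in F_q$ with $y\neq0$ and $x,\,x+y,\,x+y^2\in A$. In particular, taking $\delta=\frac14$, an estimate of this form with $\delta=\frac14$ implies that every $A\subset F_q$ with $|A|\geq Cq^{5/6}$ contains such a configuration.
   Context: For $f:F_q\to\mathbb{C}$, $\mathbb{E}[f]=\frac1q\sum_{x\in F_q}f(x)$, $\|f\|_r=\big(\frac1q\sum_{x\in F_q}|f(x)|^r\big)^{1/r}$, and $\mathcal{A}(f_1,f_2)(x)=\frac1q\sum_{y\in F_q}f_1(x+y)f_2(x+y^2)$. *)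

From mathcomp Require Import all_boot all_algebra all_field.
From mathcomp Require Import all_classical all_reals all_analysis.
From mathcomp.real_closed Require Import complex.
Import GRing.Theory Num.Theory.
Local Open Scope ring_scope.
Local Open Scope complex_scope.

Section FiniteFieldAverages.
Variables (R : realType) (F : finFieldType).

Definition qF : R := #|F|%:R.

Definition cabs2 (z : R[i]) : R := complex.Re z ^+ 2 + complex.Im z ^+ 2.

Definition expect (f : F -> R[i]) : R[i] :=
  (qF%:C)^-1 * \sum_(x : F) f x.

Definition norm2 (f : F -> R[i]) : R :=
  Num.sqrt (qF^-1 * \sum_(x : F) cabs2 (f x)).

Definition avgA (f1 f2 : F -> R[i]) (x : F) : R[i] :=
  (qF%:C)^-1 * \sum_(y : F) f1 (x + y) * f2 (x + y ^+ 2).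

End FiniteFieldAverages.

Definition odd_char (F : finFieldType) : Prop := ~~ (2%N \in [pchar F]).

Arguments cabs2 {R}.
Arguments expect {R F}.
Arguments norm2 {R F}.
Arguments avgA {R F}.

From mathcomp Require Import all_boot all_algebra all_field.
From mathcomp Require Import all_classical all_reals all_analysis.
From mathcomp.real_closed Require Import complex.
From mathcomp Require Import ring lra.
Import order.Order.TTheory GRing.Theory Num.Theory.
Local Open Scope ring_scope.

(* Test the hypothesis on f1 = f2 = 1_A.  Writing G = A(1_A, 1_A) - (|A|/q)^2, the number N
   of pairs (x, y) with x, x + y, x + y^2 in A is q <1_A, G> + |A|^3/q, and the hypothesis
   bounds sum_x G x^2 by q (C0 q^-delta |A|/q)^2.  Cauchy-Schwarz, in the square-root-free
   form -2t <u, G> <= t^2 sum u^2 + sum G^2 with t = |A|^2/(4q^2), then gives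
   N >= 3|A|^3/(4q), which exceeds the |A| trivial pairs with y = 0 as soon as
   |A| >= C q^(1 - 2delta/3); delta <= 3/4 is what makes q <= q^(2 - 4delta/3). *)

Lemma cross_sum_lower_bound (R : realDomainType) (I : finType) (u G : I -> R) t :
  - (2 * t * \sum_i u i * G i) <= t ^+ 2 * \sum_i u i ^+ 2 + \sum_i G i ^+ 2.
Proof.
rewrite mulr_sumr -sumrN mulr_sumr -big_split /=; apply: ler_sum => i _.
have := sqr_ge0 (t * u i + G i); lra.
Qed.

Lemma powRMn (R : realType) (x y : R) n :
  0 <= x -> (x `^ y) ^+ n = x `^ (y * n%:R).
Proof. by move=> x_ge0; rewrite -powR_mulrn ?powR_ge0 // -powRrM. Qed.

Lemma card_lt_count_of_cross (R : realFieldType) (q a S X : R) :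
  0 < q -> 0 <= a -> 4 * q <= a ^+ 2 -> 16 * q ^+ 4 * S <= a ^+ 5 ->
  (forall t, - (2 * t * X) <= t ^+ 2 * a + S) -> a < q * X + a ^+ 3 / q.
Proof.
move=> q_gt0 a_ge0 a_sqr_ge S_le cross.
have a_gt0 : 0 < a by nra.
pose t := a ^+ 2 / (4 * q ^+ 2).
have t_gt0 : 0 < t by rewrite divr_gt0 ?exprn_gt0 ?mulr_gt0.
have S_le_t : S <= t ^+ 2 * a.
  have -> : t ^+ 2 * a = a ^+ 5 / (16 * q ^+ 4) by rewrite /t; field; rewrite gt_eqF.
  by rewrite ler_pdivlMr ?mulr_gt0 ?exprn_gt0 // mulrC.
have X_ge : - (t * a) <= X.
  have two_t_gt0 : 0 < 2 * t by apply: mulr_gt0.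
  rewrite -(ler_pM2l two_t_gt0).
  have : 2 * t * - (t * a) = - (t ^+ 2 * a + t ^+ 2 * a) by ring.
  have := cross t; lra.
have qX_ge : - (a ^+ 3 / (4 * q)) <= q * X.
  have -> : a ^+ 3 / (4 * q) = q * (t * a) by rewrite /t; field; rewrite gt_eqF.
  by rewrite -mulrN ler_pM2l.
have a_lt : a < 3 * (a ^+ 3 / (4 * q)).
  have -> : 3 * (a ^+ 3 / (4 * q)) = a * (3 * a ^+ 2 / (4 * q)) by field; rewrite gt_eqF.
  rewrite ltr_pMr // ltr_pdivlMr ?mulr_gt0 //; nra.
have -> : a ^+ 3 / q = 4 * (a ^+ 3 / (4 * q)) by field; rewrite gt_eqF.
lra.
Qed.

Lemma card_lt_count_of_density (R : realFieldType) (C0 e b q a S X : R) :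
  0 < q -> 0 < b -> q <= b ^+ 2 -> e ^+ 2 * q ^+ 3 = b ^+ 3 ->
  (16 * C0 ^+ 2 + 2) * b <= a -> S <= q * (C0 * e * (a / q)) ^+ 2 ->
  (forall t, - (2 * t * X) <= t ^+ 2 * a + S) -> a < q * X + a ^+ 3 / q.
Proof.
move=> q_gt0 b_gt0 q_le e_b a_ge S_le.
set c := 16 * C0 ^+ 2 in a_ge *.
have c_ge0 : 0 <= c by rewrite mulr_ge0 ?sqr_ge0.
have cb_ge0 := mulr_ge0 c_ge0 (ltW b_gt0).
have cube_le : c * b ^+ 3 <= a ^+ 3.
  have cb_le : (c + 2) * b ^+ 3 <= ((c + 2) * b) ^+ 3.
    rewrite exprMn ler_pM2r ?exprn_gt0 // -[X in X <= _]expr1.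
    by rewrite ler_eXn2l //; lra.
  have : ((c + 2) * b) ^+ 3 <= a ^+ 3 by rewrite ler_pXn2r // nnegrE; lra.
  have := exprn_ge0 3 (ltW b_gt0).
  lra.
apply: card_lt_count_of_cross => //; [lra | nra |].
have -> : a ^+ 5 = a ^+ 3 * a ^+ 2 by rewrite -exprD.
apply: (le_trans _ (ler_wpM2r (sqr_ge0 a) cube_le)).
have -> : c * b ^+ 3 * a ^+ 2 = 16 * q ^+ 4 * (q * (C0 * e * (a / q)) ^+ 2).
  by rewrite -e_b /c; field; rewrite gt_eqF.
by rewrite ler_wpM2l // mulr_ge0 // exprn_ge0 // ltW.
Qed.

Section FiniteField.
Variables (R : realType) (F : finFieldType).
Local Notation q := (qF R F).

Lemma qF_ge1 : 1 <= q.
Proof. by rewrite /qF ler1n; apply/card_gt0P; exists 0. Qed.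

Lemma qF_gt0 : 0 < q.
Proof. exact: lt_le_trans ltr01 qF_ge1. Qed.

Definition indicator (A : {set F}) (x : F) : R := (x \in A)%:R.

Definition avgR (u v : F -> R) (x : F) : R :=
  q^-1 * \sum_y u (x + y) * v (x + y ^+ 2).

Definition config_count (A : {set F}) : R :=
  \sum_x \sum_y indicator A x * indicator A (x + y) * indicator A (x + y ^+ 2).

Lemma mean_sqr_ge0 (G : F -> R) : 0 <= q^-1 * \sum_x G x ^+ 2.
Proof.
rewrite mulr_ge0 ?invr_ge0 ?ler0n //.
by apply: sumr_ge0 => x _; apply: sqr_ge0.
Qed.

Lemma norm2_real (G : F -> R) :
  norm2 (fun x => (G x)%:C%C) = Num.sqrt (q^-1 * \sum_x G x ^+ 2).
Proof.
rewrite /norm2; congr (Num.sqrt (_ * _)); apply: eq_bigr => x _.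
by rewrite /cabs2 /= expr0n addr0.
Qed.

Lemma expect_real (u : F -> R) :
  expect (fun x => (u x)%:C%C) = (q^-1 * \sum_x u x)%:C%C.
Proof. by rewrite /expect rmorphM fmorphV rmorph_sum. Qed.

Lemma avgA_real (u v : F -> R) x :
  avgA (fun x => (u x)%:C%C) (fun x => (v x)%:C%C) x = (avgR u v x)%:C%C.
Proof.
rewrite /avgA /avgR rmorphM fmorphV rmorph_sum; congr (_ * _).
by apply: eq_bigr => y _; rewrite rmorphM.
Qed.

Lemma indicator_sqr A x : indicator A x ^+ 2 = indicator A x.
Proof. by rewrite /indicator; case: (x \in A); rewrite ?expr1n ?expr0n. Qed.

Lemma sum_indicator A : \sum_x indicator A x = #|A|%:R.
Proof.
rewrite -sum1_card natr_sum [RHS]big_mkcond; apply: eq_bigr => x _.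
by rewrite /indicator; case: (x \in A).
Qed.

Lemma config_count_gt_card (A : {set F}) :
  #|A|%:R < config_count A ->
  exists x y : F, y != 0 /\ x \in A /\ x + y \in A /\ x + y ^+ 2 \in A.
Proof.
move=> count_gt; apply: contrapT => no_config.
suff count_eq : config_count A = #|A|%:R by rewrite count_eq ltxx in count_gt.
rewrite -sum_indicator; apply: eq_bigr => x _.
rewrite (bigD1 0) //= addr0 expr0n /= addr0 -expr2 indicator_sqr -expr2.
rewrite indicator_sqr big1 ?addr0 // => y y_neq0; rewrite /indicator.
case: (boolP (x \in A)) => [xA|]; last by rewrite !mul0r.
case: (boolP (x + y \in A)) => [xyA|]; last by rewrite mulr0 mul0r.
case: (boolP (x + y ^+ 2 \in A)) => [xy2A|]; last by rewrite mulr0.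
by case: no_config; exists x, y.
Qed.

Lemma config_count_avgR (A : {set F}) (u := indicator A) (a := #|A|%:R) :
  config_count A = q * \sum_x u x * (avgR u u x - (a / q) ^+ 2) + a ^+ 3 / q.
Proof.
under eq_bigr do rewrite mulrBr.
rewrite sumrB -mulr_suml sum_indicator mulrBr.
have -> : q * \sum_x u x * avgR u u x = config_count A.
  rewrite /avgR /config_count mulr_sumr; apply: eq_bigr => x _.
  rewrite mulrCA mulVKf ?(gt_eqF qF_gt0) // mulr_sumr.
  by apply: eq_bigr => y _; rewrite mulrA.
by field; rewrite (gt_eqF qF_gt0).
Qed.

Lemma indicator_variance_le (A : {set F}) (c : R)
    (u := indicator A) (a := #|A|%:R) (lift := fun f : F -> R => fun x => (f x)%:C%C) :
  0 <= c ->
  norm2 (fun x => avgA (lift u) (lift u) x - expect (lift u) * expect (lift u))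
    <= c * norm2 (lift u) * norm2 (lift u) ->
  \sum_x (avgR u u x - (a / q) ^+ 2) ^+ 2 <= q * (c * (a / q)) ^+ 2.
Proof.
move=> c_ge0.
have -> : (fun x => avgA (lift u) (lift u) x - expect (lift u) * expect (lift u))
          = lift (fun x => avgR u u x - (a / q) ^+ 2).
  apply: funext => x; rewrite /lift avgA_real expect_real sum_indicator.
  by rewrite -(rmorphM (real_complex R)) -(rmorphB (real_complex R)) [q^-1 * _]mulrC expr2.
have norm2_u : norm2 (lift u) ^+ 2 = a / q.
  rewrite norm2_real sqr_sqrtr ?mean_sqr_ge0 //.
  by under eq_bigr do rewrite indicator_sqr; rewrite sum_indicator mulrC.
rewrite -mulrA -expr2 norm2_u norm2_real => le_sqrt.
have ca_ge0 : 0 <= c * (a / q) by rewrite mulr_ge0 ?divr_ge0 ?ler0n ?(ltW qF_gt0).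
rewrite -(ler_pM2l (_ : 0 < q^-1)) ?invr_gt0 ?qF_gt0 // mulrA mulVf ?(gt_eqF qF_gt0) // mul1r.
by rewrite -(sqr_sqrtr (mean_sqr_ge0 _)) ler_pXn2r // nnegrE sqrtr_ge0.
Qed.

End FiniteField.

Theorem lemma1p3 (R : realType) (delta : R) :
  0 < delta -> delta < 3 / 4 ->
  (exists C0 : R, 0 < C0 /\
     forall (F : finFieldType), odd_char F ->
     forall f1 f2 : F -> R[i],
       norm2 (fun x => avgA f1 f2 x - expect f1 * expect f2)
         <= C0 * (qF R F) `^ (- delta) * norm2 f1 * norm2 f2) ->
  exists C : R, 0 < C /\
    forall (F : finFieldType), odd_char F ->
    forall A : {set F},
      C * (qF R F) `^ (1 - 2 / 3 * delta) <= #|A|%:R ->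
      exists x y : F, y != 0 /\ x \in A /\ x + y \in A /\ x + y ^+ 2 \in A.
Proof.
move=> _ delta_lt [C0 [C0_gt0 avgA_bound]].
exists (16 * C0 ^+ 2 + 2); split; first by have := sqr_ge0 C0; lra.
move=> F oddF A A_large; apply: config_count_gt_card; rewrite config_count_avgR.
have q_ge1 := qF_ge1 R F; have q_ge0 : 0 <= qF R F by lra.
set e := qF R F `^ (- delta); set b := qF R F `^ (1 - 2 / 3 * delta).
apply: (@card_lt_count_of_density _ C0 e b _ _ _ _ _ _ _ _ A_large).
- exact: qF_gt0.
- exact: powR_gt0 (qF_gt0 R F).
- rewrite powRMn // -[X in X <= _](powRr1 q_ge0); apply: ler_powR => //; lra.
- rewrite !powRMn // -{2}(powRr1 q_ge0) powRMn // -powRD ?(gt_eqF (qF_gt0 R F)) ?implybT //.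
  by congr (_ `^ _); lra.
- apply: indicator_variance_le; last exact: avgA_bound.
  by rewrite mulr_ge0 ?powR_ge0 ?ltW.
- move=> t; rewrite -[in t ^+ 2 * _]sum_indicator.
  under [in t ^+ 2 * _]eq_bigr do rewrite -indicator_sqr.
  exact: cross_sum_lower_bound.
Qed.
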